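(* Let $R$ be a ring with no right subinjective middle class. Then every right $R$-module is subinjective extension-reflecting.
   Context: For right $R$-modules $X,Y$, $X\in \underline{\mathfrak{In}}^{-1}(Y)$ means: for every module $C$ containing $X$ as a submodule, every homomorphism $X\to Y$ extends to $C\to Y$; $\underline{\mathfrak{In}}^{-1}(Y)$ is the class of all such $X$. A module $N$ is indigent if $\underline{\mathfrak{In}}^{-1}(N)$ equals the class of injective modules. $R$ has no right subinjective middle class if every right $R$-module is either injective or indigent. $M$ is subinjective extension-reflecting if for every short exact sequence $0\to A\to B\to C\to 0$, $M\in \underline{\mathfrak{In}}^{-1}(A)\cap \underline{\mathfrak{In}}^{-1}(C)$ implies $M\in \underline{\mathfrak{In}}^{-1}(B)$. *)

(* Right R-modules are modelled as left modules over the
   converse ring R^c (lmodType R^c). *)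
From HB Require Import structures.
From mathcomp Require Import all_boot all_algebra.
Set Implicit Arguments. Unset Strict Implicit. Unset Printing Implicit Defensive.
Import GRing.Theory.
Local Open Scope ring_scope.

Section ModDefs.
Variable S : pzRingType.

Definition is_hom (X Y : lmodType S) (f : X -> Y) : Prop :=
  forall (a : S) (x y : X), f (a *: x + y) = a *: f x + f y.

Definition is_mono (X C : lmodType S) (i : X -> C) : Prop :=
  is_hom i /\ injective i.

Definition subinj (X Y : lmodType S) : Prop :=
  forall (C : lmodType S) (i : X -> C), is_mono i ->
  forall f : X -> Y, is_hom f ->
  exists g : C -> Y, is_hom g /\ (forall x, g (i x) = f x).

Definition injective_mod (M : lmodType S) : Prop :=
  forall (A B : lmodType S) (i : A -> B), is_mono i ->
  forall f : A -> M, is_hom f ->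
  exists g : B -> M, is_hom g /\ (forall a, g (i a) = f a).

Definition indigent (N : lmodType S) : Prop :=
  forall X : lmodType S, subinj X N <-> injective_mod X.

Definition no_subinj_middle_class : Prop :=
  forall M : lmodType S, injective_mod M \/ indigent M.

Definition short_exact (A B C : lmodType S) (f : A -> B) (g : B -> C) : Prop :=
  [/\ is_mono f, is_hom g, (forall c, exists b, g b = c) &
      (forall b, g b = 0 <-> exists a, f a = b)].

Definition subinj_ext_reflecting (M : lmodType S) : Prop :=
  forall (A B C : lmodType S) (f : A -> B) (g : B -> C), short_exact f g ->
  subinj M A -> subinj M C -> subinj M B.

End ModDefs.

(* If A (or C) is not injective, it is indigent, so M in In^{-1}(A) forces M
   to be injective, and an injective module is B-subinjective for every B.
   Otherwise A and C are both injective; the sequence then splits, because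
   the inclusion of the injective module A has a retraction, so
   B = A (+) C is injective and again every module is B-subinjective. *)
From HB Require Import structures.
From mathcomp Require Import all_boot all_algebra.
From Stdlib Require Import IndefiniteDescription.
Set Implicit Arguments. Unset Strict Implicit. Unset Printing Implicit Defensive.
Import GRing.Theory.
Local Open Scope ring_scope.

Section Homomorphisms.
Variables (S : pzRingType) (X Y Z : lmodType S).

Lemma homD (f : X -> Y) : is_hom f -> forall x y, f (x + y) = f x + f y.
Proof. by move=> hf x y; have := hf 1 x y; rewrite !scale1r. Qed.

Lemma hom0 (f : X -> Y) : is_hom f -> f 0 = 0.
Proof. by move=> hf; apply: (addrI (f 0)); rewrite -(homD hf) !addr0. Qed.

Lemma homN (f : X -> Y) : is_hom f -> forall x, f (- x) = - f x.
Proof. by move=> hf x; have := hf (-1) x 0; rewrite !addr0 (hom0 hf) addr0 !scaleN1r. Qed.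

Lemma homB (f : X -> Y) : is_hom f -> forall x y, f (x - y) = f x - f y.
Proof. by move=> hf x y; rewrite (homD hf) (homN hf). Qed.

Lemma is_hom_comp (f : X -> Y) (g : Y -> Z) :
  is_hom f -> is_hom g -> is_hom (fun x => g (f x)).
Proof. by move=> hf hg a x y; rewrite hf hg. Qed.

End Homomorphisms.

Section Injectives.
Variable S : pzRingType.

Lemma injective_subinj (M N : lmodType S) : injective_mod M -> subinj M N.
Proof.
move=> injM D i mono_i f hf.
have [r [hr rK]] := injM M D i mono_i id (fun _ _ _ => erefl).
by exists (fun d => f (r d)); split=> [|x]; [apply: is_hom_comp | rewrite rK].
Qed.

Lemma short_exact_section (A B C : lmodType S) (f : A -> B) (g : B -> C)
    (r : B -> A) :
  short_exact f g -> is_hom r -> (forall a, r (f a) = a) ->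
  exists s : C -> B, is_hom s /\ (forall b, f (r b) + s (g b) = b).
Proof.
move=> [[hf _] hg g_surj ker_g] hr fK.
have proj_fiber b b' : g b = g b' -> b - f (r b) = b' - f (r b').
  move=> gbb'; have /ker_g[a fa] : g (b - b') = 0 by rewrite (homB hg) gbb' subrr.
  apply/eqP; rewrite -subr_eq0 opprD addrACA -opprD -(homB hf) -(homB hr) -fa fK.
  by rewrite subrr.
pose pick c := proj1_sig (constructive_indefinite_description _ (g_surj c)).
have pickK c : g (pick c) = c := proj2_sig (constructive_indefinite_description _ (g_surj c)).
pose s c := pick c - f (r (pick c)).
have sg b : s (g b) = b - f (r b) by apply: proj_fiber; rewrite pickK.
exists s; split=> [a c c'|b]; last by rewrite sg addrC subrK.
have -> : a *: c + c' = g (a *: pick c + pick c') by rewrite hg !pickK.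
by rewrite sg hr hf scalerBr opprD addrACA.
Qed.

Lemma injective_mod_ext (A B C : lmodType S) (f : A -> B) (g : B -> C) :
  short_exact f g -> injective_mod A -> injective_mod C -> injective_mod B.
Proof.
move=> ex injA injC; have [mono_f hg _ _] := ex.
have [r [hr fK]] := injA A B f mono_f id (fun _ _ _ => erefl).
have [s [hs rsK]] := short_exact_section ex hr fK.
move=> X Y i mono_i phi hphi.
have [al [hal ali]] := injA X Y i mono_i _ (is_hom_comp hphi hr).
have [ga [hga gai]] := injC X Y i mono_i _ (is_hom_comp hphi hg).
exists (fun y => f (al y) + s (ga y)); split=> [a y y'|x].
  by rewrite hal hga mono_f.1 hs scalerDr addrACA.
by rewrite ali gai rsK.
Qed.

End Injectives.

Theorem mainTheorem18 (R : pzRingType) :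
  no_subinj_middle_class R^c ->
  forall M : lmodType R^c, subinj_ext_reflecting M.
Proof.
move=> dichotomy M A B C f g ex subMA subMC.
case: (dichotomy A) => [injA | indA]; last first.
  exact/injective_subinj/indA.
case: (dichotomy C) => [injC | indC]; last first.
  exact/injective_subinj/indC.
have injB := injective_mod_ext ex injA injC.
move=> D i mono_i; exact: injB.
Qed.
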